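(* Let $(R,+,\times)$ be a finite ring with identity $1$, of order $n$, and let $G$ be a subgroup of the multiplicative group $R^\times$ of invertible elements of $R$. Let $f_G$ be the coset index function induced by $G$. Then $f_G$ is an $(n,m,S)$ zero-difference function from $(R,+)$ to $\mathbb{Z}_m$, where $$m=\sum_{a\in d(G)}\frac{M(G,a)}{a},\qquad S=\{N(G,a)\mid a\in R\setminus\{0\}\}.$$
   Context: For a subgroup $G$ of $R^\times$ and $r\in R$, the coset $rG=\{rg\mid g\in G\}$; the sets $rG$ ($r\in R$) form a partition $D_G$ of $R$. The coset index function induced by $G$ is $f_G(x)=h_G(C_x)$, where $C_x\in D_G$ is the coset containing $x$ and $h_G:D_G\to\mathbb{Z}_{|D_G|}$ is a fixed bijection. Notation: $N(G,a)$ is the size of the union over all $g\in G$ of the solution sets $\{x\in R\mid x(g-1)=a\}$; $d(G)$ is the set of sizes $|rG|$ as $r$ runs over $R$; for a positive integer $a$, $M(G,a)$ is the number of $r\in R$ with $|rG|=a$. Definition: for finite abelian groups $A,B$, a function $f:A\to B$ is an $(n,m,S)$ zero-difference function (ZDF), where $S\subset\mathbb{N}$, if $n=|A|$, $m=|f(A)|$, and for every nonzero $a\in A$, $|\{x\in A\mid f(x+a)-f(x)=0\}|\in S$. *)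

From HB Require Import structures.
From mathcomp Require Import all_boot all_order all_algebra all_fingroup.
Set Implicit Arguments. Unset Strict Implicit. Unset Printing Implicit Defensive.
Import GRing.Theory.
Local Open Scope ring_scope.

Section CosetIndex.
Variable R : finUnitRingType.
Variable G : {group {unit R}}.

Definition ucoset (r : R) : {set R} := [set r * val g | g in G].

Definition DG : {set {set R}} := [set ucoset r | r : R].

Definition NG (a : R) : nat := #|[set x : R | [exists g in G, x * (val g - 1) == a]]|.

Definition dG : seq nat := undup [seq #|ucoset r| | r <- enum R].

Definition MG (a : nat) : nat := #|[set r : R | #|ucoset r| == a]|.

Definition mG : rat := \sum_(a <- dG) (MG a)%:R / a%:R.

Definition SG : pred nat := fun k => [exists a : R, (a != 0) && (k == NG a)].

Definition fG (h : {set R} -> 'Z_#|DG|) (x : R) : 'Z_#|DG| := h (ucoset x).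
End CosetIndex.

Definition is_ZDF (A B : finZmodType) (f : A -> B) (n m : nat) (S : pred nat) : Prop :=
  [/\ n = #|A|, m = #|f @: [set: A]|
    & forall a : A, a != 0 -> S #|[set x : A | f (x + a) - f x == 0]| ].

From HB Require Import structures.
From mathcomp Require Import all_boot all_order all_algebra all_fingroup.
Set Implicit Arguments. Unset Strict Implicit. Unset Printing Implicit Defensive.
Import GRing.Theory Num.Theory.
Local Open Scope ring_scope.

(* The cosets rG are the classes of the equivalence "y = x g for some g in G",
   so f_G(x + a) = f_G(x) iff x + a = x g, i.e. x (g - 1) = a, for some g in G:
   the zero-difference count at a is N(G, a).  The image of f_G is all of
   Z_|D_G|, and m = |D_G| because each coset C contributes |C| elements r with
   |rG| = |C|, i.e. exactly 1 to the sum defining m. *)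

Section ClassCounting.
Variables (T : finType) (K : numFieldType) (cls : T -> {set T}).
Hypothesis eq_clsE : forall x y, (cls y == cls x) = (y \in cls x).

Lemma sum_inv_card_class :
  \sum_(r : T) (#|cls r|%:R : K)^-1 = #|[set cls r | r : T]|%:R.
Proof.
rewrite (partition_big cls (mem [set cls r | r : T])); last first.
  by move=> r _; apply: imset_f.
rewrite -sum1_card natr_sum; apply: eq_bigr => _ /imsetP [x _ ->].
rewrite (eq_bigl (fun r => r \in cls x)); last by move=> r; rewrite eq_clsE.
rewrite (eq_bigr (fun _ => (#|cls x|%:R : K)^-1)); last first.
  by move=> r; rewrite -eq_clsE => /eqP ->.
have x_cls : x \in cls x by rewrite -eq_clsE.
have cls_neq0 : (#|cls x|%:R : K) != 0.
  by rewrite pnatr_eq0 -lt0n; apply/card_gt0P; exists x.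
by rewrite sumr_const -(mulr_natr (#|cls x|%:R : K)^-1) mulVf.
Qed.

End ClassCounting.

Lemma sum_card_fibers (T : finType) (K : pzRingType) (w : T -> nat) (F : nat -> K) :
  \sum_(a <- undup [seq w r | r <- enum T]) #|[set r | w r == a]|%:R * F a
  = \sum_(r : T) F (w r).
Proof.
transitivity (\sum_(a <- undup [seq w r | r <- enum T]) \sum_(r | w r == a) F a).
  by apply: eq_bigr => a _; rewrite sumr_const mulr_natl cardsE.
rewrite (exchange_big_dep xpredT) //=; apply: eq_bigr => r _.
rewrite (eq_bigl (pred1 (w r))); last by move=> a; rewrite /= eq_sym.
rewrite -big_filter filter_pred1_uniq ?undup_uniq ?big_seq1 //.
by rewrite mem_undup map_f ?mem_enum.
Qed.

Section Cosets.
Variables (R : finUnitRingType) (G : {group {unit R}}).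

Lemma mem_ucoset x : x \in ucoset G x.
Proof. by apply/imsetP; exists 1%g; rewrite ?group1 ?FinRing.val_unit1 ?mulr1. Qed.

Lemma ucoset_subset x y : y \in ucoset G x -> ucoset G y \subset ucoset G x.
Proof.
case/imsetP=> g Gg ->; apply/subsetP=> _ /imsetP [g' Gg' ->].
by apply/imsetP; exists (g * g')%g; rewrite ?groupM // FinRing.val_unitM mulrA.
Qed.

Lemma eq_ucosetE x y : (ucoset G y == ucoset G x) = (y \in ucoset G x).
Proof.
apply/eqP/idP=> [<-|y_x]; first exact: mem_ucoset.
apply/eqP; rewrite eqEsubset ucoset_subset //=; apply: ucoset_subset.
case/imsetP: y_x => g Gg ->; apply/imsetP; exists g^-1%g; rewrite ?groupV //.
by rewrite -mulrA -FinRing.val_unitM mulgV FinRing.val_unit1 mulr1.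
Qed.

Lemma ucoset_in_DG x : ucoset G x \in DG G.
Proof. exact: imset_f. Qed.

Lemma card_DG_gt1 : (1 < #|DG G|)%N.
Proof.
have coset01 : ucoset G 0 != ucoset G 1.
  rewrite eq_sym eq_ucosetE; apply/negP=> /imsetP [g _].
  by rewrite mul0r; apply/eqP/oner_neq0.
have sub01 : [set ucoset G 0; ucoset G 1] \subset DG G.
  by apply/subsetP=> C; rewrite !inE => /orP [] /eqP ->; apply: ucoset_in_DG.
by apply: leq_trans (subset_leq_card sub01); rewrite cards2 coset01.
Qed.

Lemma eq_ucoset_addE x a :
  (ucoset G (x + a) == ucoset G x) = [exists g in G, x * (val g - 1) == a].
Proof.
rewrite eq_ucosetE; apply/imsetP/existsP => [[g Gg xa]|[g /andP [Gg /eqP <-]]].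
  by exists g; rewrite Gg /= mulrBr mulr1 -xa addrC addKr.
by exists g; rewrite // mulrBr mulr1 addrC subrK.
Qed.

Lemma mG_card_DG : mG G = #|DG G|%:R.
Proof.
rewrite -(sum_inv_card_class _ eq_ucosetE) -(sum_card_fibers _ (fun a => a%:R^-1)).
by apply: eq_bigr => a _; rewrite /MG.
Qed.

Variable h : {set R} -> 'Z_#|DG G|.
Hypotheses (h_inj : {in DG G &, injective h})
           (h_onto : h @: DG G = [set: 'Z_#|DG G|]).

Lemma imset_fG : fG h @: [set: R] = [set: 'Z_#|DG G|].
Proof.
apply/eqP; rewrite eqEsubset subsetT -h_onto.
by apply/subsetP=> _ /imsetP [_ /imsetP [x _ ->] ->]; apply: imset_f.
Qed.

Lemma card_zero_diff_fG a :
  #|[set x | fG h (x + a) - fG h x == 0]| = NG G a.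
Proof.
apply: eq_card => x; rewrite !inE subr_eq0 -eq_ucoset_addE /fG.
by apply/eqP/eqP => [eq_h|->] //; apply: h_inj eq_h; apply: ucoset_in_DG.
Qed.

End Cosets.

Theorem theorem2p3 (R : finUnitRingType) (G : {group {unit R}})
    (h : {set R} -> 'Z_#|DG G|)
    (h_inj : {in DG G &, injective h})
    (h_onto : h @: DG G = [set: 'Z_#|DG G|]) :
  exists m : nat, (m%:R : rat) = mG G /\
    is_ZDF (fG h) #|R| m (SG G).
Proof.
exists #|DG G|; split; first by rewrite mG_card_DG.
split=> //.
- by rewrite imset_fG // cardsT card_ord Zp_cast ?card_DG_gt1.
- move=> a a_neq0; apply/existsP; exists a.
  by rewrite a_neq0 (card_zero_diff_fG h_inj) eqxx.
Qed.
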